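(* Let $\mathcal Z\subseteq\mathcal H$ be a subspace, let $A$ be a $\Delta$-AGSP for $\mathcal Z$ with $\Delta\le 1/2$, and set $\tilde H=I-A^\dagger A$. Let $\delta>0$ and let $\mathcal Y\subseteq\mathcal H$ be $\delta$-viable for $\mathcal Z$. Let $\tilde{\mathcal Z}\subseteq\mathcal Y$ be the support (range) of the spectral projection $\mathbf 1_{[0,\delta]}(\tilde H|_{\mathcal Y})$, regarded as a subspace of $\mathcal H$. Then $\tilde{\mathcal Z}$ and $\mathcal Z$ are $2\delta$-close.
   Context: For a subspace $\mathcal Y\subseteq\mathcal H$, $P_{\mathcal Y}$ is the orthogonal projection onto $\mathcal Y$, and for an operator $X$ on $\mathcal H$, $X|_{\mathcal Y}=\Gamma X\Gamma^\dagger$ is its two-sided restriction, where $\Gamma:\mathcal H\to\mathcal Y$ is the projection onto $\mathcal Y$ and $\Gamma^\dagger$ the inclusion. $\mathcal Y$ is $\delta$-viable for $\mathcal Z$ if $\|P_{\mathcal Y}|z\rangle\|^2\ge1-\delta$ for every unit $|z\rangle\in\mathcal Z$; two subspaces are $\delta$-close if each is $\delta$-viable for the other. A $\Delta$-AGSP for $\mathcal Z$ is an operator $A=I_{\mathcal Z}\oplus A_{\mathcal Z^\perp}$ on $\mathcal H$ with $A_{\mathcal Z^\perp}$ an operator on $\mathcal Z^\perp$ of norm at most $\sqrt\Delta$. *)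

From HB Require Import structures.
From mathcomp Require Import all_boot all_order all_algebra.
Set Implicit Arguments.
Unset Strict Implicit.
Unset Printing Implicit Defensive.
Import Order.TTheory GRing.Theory Num.Theory.
Local Open Scope ring_scope.
Local Open Scope sesquilinear_scope.

(* Conventions (MathComp's spectral.v conventions):
   - H = C^n with C : numClosedFieldType (e.g. the complex numbers);
     vectors are row vectors 'rV[C]_n, inner product dotmx u v = u *m v^t*.
   - An operator X on H acts on the right: v |-> v *m X.  Its adjoint is X^t*
     (conjugate transpose); the composite "first X then Y" is X *m Y, so the
     operator A^dagger A is the matrix A *m A^t*.
   - A subspace is the row space of a matrix; membership is (v <= U)%MS.
   - P_Y is proj_ortho Y (orthogonal projection onto the row space of Y). *)

Section Defs.
Variable C : numClosedFieldType.

Definition sqnorm n (v : 'rV[C]_n) : C := dotmx v v.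

Definition orth_to n p (v : 'rV[C]_n) (Z : 'M[C]_(p, n)) : Prop :=
  forall z : 'rV[C]_n, (z <= Z)%MS -> dotmx z v = 0.

Definition viable n p q (delta : C) (Y : 'M[C]_(p, n)) (Z : 'M[C]_(q, n)) :
  Prop :=
  forall z : 'rV[C]_n, (z <= Z)%MS -> sqnorm z = 1 ->
    1 - delta <= sqnorm (z *m proj_ortho Y).

Definition close n p q (delta : C) (Y : 'M[C]_(p, n)) (Z : 'M[C]_(q, n)) :
  Prop := viable delta Y Z /\ viable delta Z Y.

(* A is a Delta-AGSP for Z: A = I_Z (+) A_{Z^perp}, with A_{Z^perp} an
   operator on Z^perp of operator norm <= sqrt Delta, i.e.
   ||A w||^2 <= Delta ||w||^2 for w in Z^perp. *)
Definition AGSP n p (Delta : C) (Z : 'M[C]_(p, n)) (A : 'M[C]_n) : Prop :=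
  (forall z : 'rV[C]_n, (z <= Z)%MS -> z *m A = z) /\
  (forall w : 'rV[C]_n, orth_to w Z ->
     orth_to (w *m A) Z /\ sqnorm (w *m A) <= Delta * sqnorm w).

(* Gamma^dagger : coordinates in an orthonormal basis of Y -> H.
   Rows of this matrix form an orthonormal basis of Y;
   Gamma is v |-> v *m (onb Y)^t*, Gamma^dagger is c |-> c *m onb Y. *)
Definition onb n p (Y : 'M[C]_(p, n)) : 'M[C]_(\rank Y, n) :=
  schmidt (row_base Y).

(* two-sided restriction X|_Y = Gamma X Gamma^dagger (right-action matrix) *)
Definition restr n p (X : 'M[C]_n) (Y : 'M[C]_(p, n)) : 'M[C]_(\rank Y) :=
  onb Y *m X *m (onb Y)^t*.

Definition spec_proj k (a b : C) (K : 'M[C]_k) : 'M[C]_k :=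
  invmx (spectralmx K) *m
  diag_mx (map_mx (fun x => ((a <= x) && (x <= b))%:R) (spectral_diag K)) *m
  spectralmx K.

Definition Ztilde n p (delta : C) (X : 'M[C]_n) (Y : 'M[C]_(p, n)) :
  'M[C]_(\rank Y, n) :=
  spec_proj 0 delta (restr X Y) *m onb Y.

End Defs.

From HB Require Import structures.
From mathcomp Require Import all_boot all_order all_algebra.
Import Order.TTheory GRing.Theory Num.Theory.
Local Open Scope ring_scope.
Local Open Scope sesquilinear_scope.

(* The energy <v|Ht|v> = ||v||^2 - ||v A||^2
   only sees the residual r = v - P_Z v, and as A contracts Z^perp by Delta,
   (1 - Delta) ||r||^2 <= <v|Ht|v> <= ||r||^2.
   - Z is 2 delta-viable for Zt: a vector of Zt lives on eigenvalues of Ht|_Y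
     in [0, delta], so its energy, hence half its residual, is at most delta.
   - Zt is 2 delta-viable for Z: a projection bound from Zt to Z transfers
     back from Z to Zt as soon as P_Zt is injective on Z (a singular-value
     argument on the Gram matrix of orthonormal bases).  If w in Z is
     orthogonal to Zt, then y = P_Y w lives on eigenvalues > delta, while by
     viability and Cauchy-Schwarz P_Z y keeps a fraction 1 - delta of y, so
     the energy of y is at most delta ||y||^2; thus y = 0 and then w = 0.
   The file develops inner products and projections, the AGSP energy bounds,
   the spectral calculus of normal matrices, the transfer of projection
   bounds, the subspace Zt, and finally the two halves of closeness. *)

Section Geometry.
Context {C : numClosedFieldType}.

Lemma adjmxM {m n p} (A : 'M[C]_(m, n)) (B : 'M[C]_(n, p)) :
  (A *m B)^t* = B^t* *m A^t*.
Proof. by rewrite trmx_mul map_mxM. Qed.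

Lemma dotmx_adj {n m} (M : 'M[C]_(n, m)) (u : 'rV[C]_n) (v : 'rV[C]_m) :
  dotmx (u *m M) v = dotmx u (v *m M^t*).
Proof. by rewrite !dotmxE adjmxM trmxCK mulmxA. Qed.

Lemma sqnorm_ge0 {n} (v : 'rV[C]_n) : 0 <= sqnorm v.
Proof. exact: dnorm_ge0. Qed.

Lemma sqnorm_eq0 {n} (v : 'rV[C]_n) : (sqnorm v == 0) = (v == 0).
Proof. exact: dnorm_eq0. Qed.

Lemma sqnorm0 {n} : sqnorm (0 : 'rV[C]_n) = 0.
Proof. by rewrite /sqnorm linear0l. Qed.

Lemma sqnormZ {n} (a : C) (v : 'rV[C]_n) : sqnorm (a *: v) = `|a| ^+ 2 * sqnorm v.
Proof. exact: dnormZ. Qed.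

Lemma sqnormDd {n} (u v : 'rV[C]_n) :
  dotmx u v = 0 -> sqnorm (u + v) = sqnorm u + sqnorm v.
Proof. exact: hnormDd. Qed.

Lemma sqnorm_unitary {m n} (M : 'M[C]_(m, n)) (x : 'rV[C]_m) :
  M \is unitarymx -> sqnorm (x *m M) = sqnorm x.
Proof. by move=> /unitarymxP MM; rewrite /sqnorm dotmx_adj -mulmxA MM mulmx1. Qed.

Lemma dotmx_sub_ortho {n p} {S : 'M[C]_(p, n)} {u v : 'rV[C]_n} :
  (u <= S)%MS -> v *m S^t* = 0 -> dotmx u v = 0.
Proof. by move=> /submxP [c ->] vS; rewrite dotmx_adj vS linear0r. Qed.

End Geometry.

Section Projections.
Context {C : numClosedFieldType}.

Lemma dotmxC {n} (u v : 'rV[C]_n) : dotmx u v = (dotmx v u)^*.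
Proof. by rewrite hermC expr0 mul1r. Qed.

Lemma proj_ortho_residual {n p} (S : 'M[C]_(p, n)) (v : 'rV[C]_n) :
  (v - v *m proj_ortho S) *m S^t* = 0.
Proof. exact/orthomx1P/proj_ortho_compl_sub. Qed.

Lemma orth_to_residual {n p} (S : 'M[C]_(p, n)) (v : 'rV[C]_n) :
  orth_to (v - v *m proj_ortho S) S.
Proof. by move=> u uS; exact: dotmx_sub_ortho uS (proj_ortho_residual S v). Qed.

Lemma dotmx_proj_r {n p} (S : 'M[C]_(p, n)) (u v : 'rV[C]_n) :
  (u <= S)%MS -> dotmx u (v *m proj_ortho S) = dotmx u v.
Proof.
move=> uS; rewrite -[in RHS](subrK (v *m proj_ortho S) v) linearDr /=.
by rewrite (orth_to_residual S v u uS) add0r.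
Qed.

Lemma dotmx_proj_l {n p} (S : 'M[C]_(p, n)) (u v : 'rV[C]_n) :
  (u <= S)%MS -> dotmx (v *m proj_ortho S) u = dotmx v u.
Proof. by move=> uS; rewrite dotmxC dotmx_proj_r // -dotmxC. Qed.

Lemma sqnorm_proj_split {n p} (S : 'M[C]_(p, n)) (v : 'rV[C]_n) :
  sqnorm v = sqnorm (v *m proj_ortho S) + sqnorm (v - v *m proj_ortho S).
Proof.
rewrite -sqnormDd; first by rewrite addrC subrK.
exact: orth_to_residual S v _ (proj_ortho_sub S v).
Qed.

Lemma onb_unitary {n p} (S : 'M[C]_(p, n)) : onb S \is unitarymx.
Proof. by rewrite schmidt_unitarymx // rank_leq_col. Qed.

Lemma onb_eqmx {n p} (S : 'M[C]_(p, n)) : (onb S :=: S)%MS.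
Proof.
apply: eqmx_trans (eq_row_base S).
by apply: eqmx_schmidt_free; rewrite row_base_free.
Qed.

Lemma proj_ortho_onb {n p} (S : 'M[C]_(p, n)) :
  proj_ortho S = (onb S)^t* *m onb S.
Proof.
have /unitarymxP BB := onb_unitary S.
suff eq_v (v : 'rV[C]_n) : v *m proj_ortho S = v *m ((onb S)^t* *m onb S).
  apply/row_matrixP => i.
  by rewrite -[proj_ortho S]mul1mx -[_ *m onb S]mul1mx !row_mul eq_v.
set X := (onb S)^t* *m onb S.
rewrite -[v in LHS](subrK (v *m X)) mulmxDl.
have -> : (v - v *m X) *m proj_ortho S = 0.
  apply/proj_ortho_0/orthomx1P.
  have /submxP [D ->] : (S <= onb S)%MS by rewrite onb_eqmx.
  by rewrite adjmxM mulmxA mulmxBl /X -!mulmxA BB mulmx1 subrr mul0mx.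
rewrite add0r proj_ortho_id // /X mulmxA -(onb_eqmx S).
exact: submxMl.
Qed.

Lemma sqnorm_proj {n p} (S : 'M[C]_(p, n)) (v : 'rV[C]_n) :
  sqnorm (v *m proj_ortho S) = sqnorm (v *m (onb S)^t*).
Proof. by rewrite proj_ortho_onb mulmxA sqnorm_unitary ?onb_unitary. Qed.

Lemma viableW {n p q} {delta : C} {Y : 'M[C]_(p, n)} {Z : 'M[C]_(q, n)} :
  viable delta Y Z -> forall w, (w <= Z)%MS ->
  (1 - delta) * sqnorm w <= sqnorm (w *m proj_ortho Y).
Proof.
move=> hY w wZ; have [->|w0] := eqVneq w 0; first by rewrite mul0mx !sqnorm0 mulr0.
have s0 : 0 < sqnorm w by rewrite /sqnorm dnorm_gt0.
set a := (sqrtC (sqnorm w))^-1.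
have a2 : `|a| ^+ 2 = (sqnorm w)^-1.
  by rewrite /a normfV ger0_norm ?sqrtC_ge0 ?ltW // exprVn sqrtCK.
have := hY (a *: w) (scalemx_sub _ wZ).
rewrite -scalemxAl !sqnormZ a2 mulVf ?gt_eqF // => /(_ erefl).
by rewrite ler_pdivlMl // mulrC.
Qed.

End Projections.

Section Energy.
Context {C : numClosedFieldType} {n : nat}.

Definition energy (A : 'M[C]_n) (v : 'rV[C]_n) : C :=
  dotmx (v *m (1%:M - A *m A^t*)) v.

Lemma energyE (A : 'M[C]_n) (v : 'rV[C]_n) :
  energy A v = sqnorm v - sqnorm (v *m A).
Proof. by rewrite /energy mulmxBr mulmx1 linearBl /= mulmxA dotmx_adj trmxCK. Qed.

Context {Z A : 'M[C]_n} {Delta : C}.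
Hypothesis hA : AGSP Delta Z A.

(* Since A fixes Z and maps Z^perp into itself, only the component of v
   orthogonal to Z carries energy. *)
Lemma energy_residual (v : 'rV[C]_n) (w := v - v *m proj_ortho Z) :
  energy A v = sqnorm w - sqnorm (w *m A).
Proof.
set u := v *m proj_ortho Z.
have uZ : (u <= Z)%MS by exact: proj_ortho_sub.
have hvA : v *m A = u + w *m A by rewrite -{1}(subrK u v) mulmxDl (hA.1 _ uZ) addrC.
have uwA : dotmx u (w *m A) = 0 by exact: (hA.2 w (orth_to_residual Z v)).1 u uZ.
rewrite energyE hvA sqnormDd // (sqnorm_proj_split Z v) -/u -/w.
by rewrite opprD addrACA subrr add0r.
Qed.

Lemma energy_le_residual (v : 'rV[C]_n) :
  energy A v <= sqnorm (v - v *m proj_ortho Z).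
Proof. by rewrite energy_residual lerBlDr lerDl sqnorm_ge0. Qed.

Lemma energy_ge_residual (v : 'rV[C]_n) :
  (1 - Delta) * sqnorm (v - v *m proj_ortho Z) <= energy A v.
Proof.
rewrite energy_residual mulrBl mul1r lerD2l lerN2.
exact: (hA.2 _ (orth_to_residual Z v)).2.
Qed.

Lemma energy_ge0 (v : 'rV[C]_n) : Delta <= 1 -> 0 <= energy A v.
Proof.
move=> D1; apply: le_trans (energy_ge_residual v).
by rewrite mulr_ge0 ?sqnorm_ge0 ?subr_ge0.
Qed.

End Energy.

Section Spectral.
Context {C : numClosedFieldType}.

Lemma sqnorm_sum {k} (c : 'rV[C]_k) : sqnorm c = \sum_i `|c 0 i| ^+ 2.
Proof. by rewrite /sqnorm dotmxE mxE; apply: eq_bigr => i _; rewrite normCK !mxE. Qed.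

Lemma dotmx_diag {k} (g c : 'rV[C]_k) :
  dotmx (c *m diag_mx g) c = \sum_i g 0 i * `|c 0 i| ^+ 2.
Proof.
rewrite dotmxE mul_mx_diag !mxE; apply: eq_bigr => i _.
by rewrite !mxE normCK mulrA [c 0 i * _]mulrC.
Qed.

Lemma hermitian_normal {k} (S : 'M[C]_k) : S^t* = S -> S \is normalmx.
Proof. by move=> hS; apply/normalmxP; rewrite hS. Qed.

Context {k : nat} (T : 'M[C]_k).
Hypothesis normalT : T \is normalmx.
Local Notation U := (spectralmx T).
Local Notation d := (spectral_diag T).

Lemma spectral_decomp : T = U^t* *m diag_mx d *m U.
Proof. by rewrite {1}(orthomx_spectralP normalT) invmx_unitary ?spectral_unitarymx. Qed.

Definition eigen_coord (x : 'rV[C]_k) : 'rV[C]_k := x *m U^t*.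

Lemma eigen_coordK (x : 'rV[C]_k) : eigen_coord x *m U = x.
Proof. by rewrite /eigen_coord mulmxKtV ?spectral_unitarymx. Qed.

Lemma sqnorm_eigen_coord (x : 'rV[C]_k) : sqnorm (eigen_coord x) = sqnorm x.
Proof. by rewrite sqnorm_unitary ?trmxC_unitary ?spectral_unitarymx. Qed.

Lemma dotmx_spectral (x : 'rV[C]_k) :
  dotmx (x *m T) x = \sum_i d 0 i * `|eigen_coord x 0 i| ^+ 2.
Proof.
by rewrite [in x *m T]spectral_decomp !mulmxA dotmx_adj dotmx_diag.
Qed.

Lemma eigenvectorP (j : 'I_k) : row j U *m T = d 0 j *: row j U.
Proof.
rewrite rowE [in X in _ *m X = _]spectral_decomp !mulmxA mulmxtVK ?spectral_unitarymx //.
rewrite scalemxAl; congr (_ *m _); apply/rowP => i; rewrite mul_mx_diag !mxE.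
by rewrite eqxx; case: eqP => [->|_]; rewrite ?mulr1 ?mul1r ?mulr0 ?mul0r.
Qed.

Lemma sqnorm_eigenvector (j : 'I_k) : sqnorm (row j U) = 1.
Proof.
rewrite rowE sqnorm_unitary ?spectral_unitarymx // sqnorm_sum (bigD1 j) //= big1.
  by rewrite mxE !eqxx normr1 expr1n addr0.
by move=> i ij; rewrite mxE eqxx /= (negPf ij) normr0 expr0n.
Qed.

Lemma eigenvalue_form (j : 'I_k) : dotmx (row j U *m T) (row j U) = d 0 j.
Proof. by rewrite eigenvectorP linearZl /= [dotmx _ _](sqnorm_eigenvector j) mulr1. Qed.

Lemma spectral_lower_bound (a : C) : (forall j, a <= d 0 j) ->
  forall x, a * sqnorm x <= dotmx (x *m T) x.
Proof.
move=> ha x; rewrite dotmx_spectral -sqnorm_eigen_coord sqnorm_sum mulr_sumr.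
by apply: ler_sum => j _; rewrite ler_wpM2r ?exprn_ge0.
Qed.

Lemma eigen_coordE (x : 'rV[C]_k) (i : 'I_k) : eigen_coord x 0 i = dotmx x (row i U).
Proof.
rewrite dotmxE rowE adjmxM mulmxA.
have -> : (delta_mx 0 i : 'rV[C]_k)^t* = delta_mx i 0.
  by apply/matrixP => a b; rewrite !mxE conjC_nat andbC.
by rewrite -colE !mxE.
Qed.

Lemma form_le_of_support (b : C) (x : 'rV[C]_k) :
  (forall i, eigen_coord x 0 i != 0 -> d 0 i <= b) ->
  dotmx (x *m T) x <= b * sqnorm x.
Proof.
move=> hx; rewrite dotmx_spectral -sqnorm_eigen_coord sqnorm_sum mulr_sumr.
apply: ler_sum => i _; have [->|/hx di] := eqVneq (eigen_coord x 0 i) 0.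
  by rewrite normr0 expr0n !mulr0.
by rewrite ler_wpM2r ?exprn_ge0.
Qed.

Lemma support_gt_form_le (b : C) (x : 'rV[C]_k) :
  (forall i, eigen_coord x 0 i != 0 -> b < d 0 i) ->
  dotmx (x *m T) x <= b * sqnorm x -> x = 0.
Proof.
move=> hx; rewrite dotmx_spectral -sqnorm_eigen_coord sqnorm_sum mulr_sumr.
rewrite -subr_le0 -sumrB; under eq_bigr do rewrite -mulrBl.
set c := eigen_coord x => sum_le0.
have t_ge0 i : 0 <= (d 0 i - b) * `|c 0 i| ^+ 2.
  have [->|/hx di] := eqVneq (c 0 i) 0; first by rewrite normr0 expr0n mulr0.
  by rewrite mulr_ge0 ?exprn_ge0 // subr_ge0 ltW.
have sum0 : \sum_i (d 0 i - b) * `|c 0 i| ^+ 2 = 0.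
  by apply/le_anti; rewrite sum_le0 sumr_ge0.
suff c0 : c = 0 by rewrite -(eigen_coordK x) -/c c0 mul0mx.
apply/rowP => i; rewrite [RHS]mxE; have [//|ci] := eqVneq (c 0 i) 0.
have := psumr_eq0P (fun j _ => t_ge0 j) sum0 (i := i) isT; move/eqP.
by rewrite mulf_eq0 subr_eq0 gt_eqF ?hx //= sqrf_eq0 normr_eq0 (negPf ci).
Qed.

Lemma eigen_coord_spec_proj (a b : C) (x : 'rV[C]_k) (i : 'I_k) :
  eigen_coord (x *m spec_proj a b T) 0 i =
  ((a <= d 0 i) && (d 0 i <= b))%:R * eigen_coord x 0 i.
Proof.
rewrite /eigen_coord /spec_proj invmx_unitary ?spectral_unitarymx // !mulmxA.
by rewrite mulmxtVK ?spectral_unitarymx // mul_mx_diag !mxE mulrC.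
Qed.

Lemma eigenvector_spec_proj (a b : C) (i : 'I_k) :
  row i U *m spec_proj a b T = ((a <= d 0 i) && (d 0 i <= b))%:R *: row i U.
Proof.
rewrite rowE /spec_proj invmx_unitary ?spectral_unitarymx // !mulmxA.
rewrite mulmxtVK ?spectral_unitarymx // scalemxAl; congr (_ *m _).
apply/rowP => j; rewrite mul_mx_diag !mxE eqxx /=.
by case: eqP => [->|_]; rewrite ?mulr1 ?mul1r ?mulr0 ?mul0r.
Qed.

End Spectral.

Section AdjointBound.
Context {C : numClosedFieldType}.

(* If M : C^q -> C^r is bounded below by a and M^dagger is injective, then
   M^dagger is bounded below by a as well: every eigenvalue mu of M^dagger M
   is nonzero and, for a unit eigenvector v, a mu = a ||v M^dagger||^2
   <= ||v M^dagger M||^2 = mu^2. *)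
Lemma adjoint_lower_bound {q r} (M : 'M[C]_(q, r)) (a : C) :
  (forall c : 'rV[C]_q, a * sqnorm c <= sqnorm (c *m M)) ->
  (forall x : 'rV[C]_r, x *m M^t* = 0 -> x = 0) ->
  forall x : 'rV[C]_r, a * sqnorm x <= sqnorm (x *m M^t*).
Proof.
move=> boundM injMt.
set S := M^t* *m M.
have normalS : S \is normalmx by apply: hermitian_normal; rewrite /S adjmxM trmxCK.
have formS x : sqnorm (x *m M^t*) = dotmx (x *m S) x.
  by rewrite /S mulmxA dotmx_adj.
move=> x; rewrite formS; apply: (spectral_lower_bound S normalS) => j.
set v := row j (spectralmx S); set mu := spectral_diag S 0 j.
have v1 : sqnorm v = 1 by exact: sqnorm_eigenvector.
have normvMt : sqnorm (v *m M^t*) = mu by rewrite formS eigenvalue_form.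
have mu_gt0 : 0 < mu.
  rewrite -normvMt /sqnorm dnorm_gt0; apply/eqP => /injMt v0.
  by move: v1; rewrite v0 sqnorm0 => /esym/eqP; rewrite oner_eq0.
have := boundM (v *m M^t*).
rewrite -mulmxA -/S (eigenvectorP S normalS) sqnormZ v1 normvMt mulr1 gtr0_norm //.
by rewrite expr2 ler_pM2r.
Qed.

End AdjointBound.

Section Subspaces.
Context {C : numClosedFieldType}.

Lemma onb_coordK {n p} (S : 'M[C]_(p, n)) (z : 'rV[C]_n) :
  (z <= S)%MS -> z *m (onb S)^t* *m onb S = z.
Proof. by move=> zS; rewrite -mulmxA -proj_ortho_onb proj_ortho_id. Qed.

Lemma onb_sub {n p} (S : 'M[C]_(p, n)) (x : 'rV[C]_(\rank S)) :
  (x *m onb S <= S)%MS.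
Proof. by rewrite -(onb_eqmx S); exact: submxMl. Qed.

Lemma sqnorm_onb {n p} (S : 'M[C]_(p, n)) (x : 'rV[C]_(\rank S)) :
  sqnorm (x *m onb S) = sqnorm x.
Proof. exact/sqnorm_unitary/onb_unitary. Qed.

(* In coordinates this is
   adjoint_lower_bound for the Gram matrix onb Q (onb Z)^dagger. *)
Lemma proj_bound_sym {n q s} (Z : 'M[C]_(q, n)) (Q : 'M[C]_(s, n)) (a : C) :
  (forall v : 'rV[C]_n, (v <= Q)%MS -> a * sqnorm v <= sqnorm (v *m proj_ortho Z)) ->
  (forall w : 'rV[C]_n, (w <= Z)%MS -> w *m proj_ortho Q = 0 -> w = 0) ->
  forall z : 'rV[C]_n, (z <= Z)%MS -> a * sqnorm z <= sqnorm (z *m proj_ortho Q).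
Proof.
move=> boundQ injZ z zZ.
set Bz := onb Z; set Bq := onb Q; set M := Bq *m Bz^t*.
have adjM : M^t* = Bz *m Bq^t* by rewrite /M adjmxM trmxCK.
have boundM : forall c, a * sqnorm c <= sqnorm (c *m M).
  move=> c; rewrite -(sqnorm_onb Q) /M mulmxA -sqnorm_proj.
  exact/boundQ/onb_sub.
have injMt : forall x : 'rV[C]_(\rank Z), x *m M^t* = 0 -> x = 0.
  move=> x xM; have xBz0 : x *m Bz = 0.
    apply: injZ; first exact: onb_sub.
    by rewrite proj_ortho_onb mulmxA -/Bq -(mulmxA x) -adjM xM mul0mx.
  by rewrite -(mulmxtVK x (onb_unitary Z)) -/Bz xBz0 mul0mx.
have := adjoint_lower_bound M a boundM injMt (z *m Bz^t*).
by rewrite sqnorm_proj adjM mulmxA onb_coordK // -(sqnorm_onb Z) onb_coordK.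
Qed.

(* By Cauchy-Schwarz,
   ||P_Y w||^2 = <P_Z P_Y w, w> <= ||P_Z P_Y w|| ||w||, and viability bounds
   ||w||^2 by ||P_Y w||^2 / (1 - delta). *)
Lemma viable_proj_back {n p q} {delta : C} {Y : 'M[C]_(p, n)} {Z : 'M[C]_(q, n)} :
  viable delta Y Z -> delta < 1 -> forall w : 'rV[C]_n, (w <= Z)%MS ->
  (1 - delta) * sqnorm (w *m proj_ortho Y) <=
  sqnorm (w *m proj_ortho Y *m proj_ortho Z).
Proof.
move=> hY d1 w wZ; set y := w *m proj_ortho Y; set y' := y *m proj_ortho Z.
have yw : dotmx y' w = sqnorm y.
  by rewrite dotmx_proj_l // -(dotmx_proj_r Y y w (proj_ortho_sub Y w)).
have cs : `|dotmx y' w| ^+ 2 <= sqnorm y' * sqnorm w :=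
  (CauchySchwarz (@dotmx C n) y' w).1.
rewrite yw ger0_norm ?sqnorm_ge0 // in cs.
have hv : (1 - delta) * sqnorm w <= sqnorm y := viableW hY _ wZ.
have [y0|y_neq0] := eqVneq (sqnorm y) 0; first by rewrite y0 mulr0 sqnorm_ge0.
have y_gt0 : 0 < sqnorm y by rewrite lt_def y_neq0 sqnorm_ge0.
rewrite -(ler_pM2r y_gt0).
apply: le_trans (_ : _ <= sqnorm y' * ((1 - delta) * sqnorm w)) _.
  rewrite -mulrA -expr2 [X in _ <= X]mulrCA.
  by apply: ler_wpM2l cs; rewrite subr_ge0 ltW.
by apply: ler_wpM2l hv; apply: sqnorm_ge0.
Qed.

End Subspaces.

Section LowEnergySubspace.
Context {C : numClosedFieldType} {n p : nat}.
Context {Y : 'M[C]_(p, n)} {A : 'M[C]_n} {delta : C}.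
Local Notation Ht := (1%:M - A *m A^t*).
Local Notation W := (onb Y).
Local Notation T := (restr Ht Y).
Local Notation U := (spectralmx T).
Local Notation d := (spectral_diag T).
Local Notation Zt := (Ztilde delta Ht Y).

Lemma restr_normal : T \is normalmx.
Proof.
have HtH : Ht^t* = Ht by rewrite linearB /= map_mxB trmx1 map_mx1 adjmxM trmxCK.
by apply: hermitian_normal; rewrite /restr !adjmxM trmxCK HtH mulmxA.
Qed.

Lemma energy_onb (x : 'rV[C]_(\rank Y)) : energy A (x *m W) = dotmx (x *m T) x.
Proof. by rewrite /energy /restr !mulmxA [RHS]dotmx_adj trmxCK. Qed.

Lemma Ztilde_low_energy (v : 'rV[C]_n) :
  (v <= Zt)%MS -> energy A v <= delta * sqnorm v.
Proof.
move=> /submxP [c ->]; rewrite /Ztilde mulmxA energy_onb sqnorm_onb.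
apply: (form_le_of_support _ restr_normal) => i.
by rewrite eigen_coord_spec_proj; case: andP => [[_ ->] //|_]; rewrite mul0r eqxx.
Qed.

Lemma eigenvector_Ztilde (i : 'I_(\rank Y)) :
  0 <= d 0 i -> d 0 i <= delta -> (row i U *m W <= Zt)%MS.
Proof.
move=> d_ge0 d_le; apply/submxP; exists (row i U).
by rewrite /Ztilde mulmxA eigenvector_spec_proj d_ge0 d_le scale1r.
Qed.

Lemma orth_Ztilde_coord (w : 'rV[C]_n) (i : 'I_(\rank Y)) :
  w *m proj_ortho Zt = 0 -> 0 <= d 0 i -> d 0 i <= delta ->
  eigen_coord T (w *m W^t*) 0 i = 0.
Proof.
move=> wZt d_ge0 d_le; rewrite eigen_coordE dotmxC -dotmx_adj.
rewrite -(dotmx_proj_r _ _ _ (eigenvector_Ztilde i d_ge0 d_le)) wZt.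
by rewrite linear0r conjC0.
Qed.

Hypothesis energy_ge0 : forall v : 'rV[C]_n, 0 <= energy A v.
Hypothesis delta_real : delta \is Num.real.

Lemma restr_spectrum_ge0 (i : 'I_(\rank Y)) : 0 <= d 0 i.
Proof. by rewrite -(eigenvalue_form _ restr_normal) -energy_onb. Qed.

(* A vector orthogonal to Ztilde whose projection onto Y has energy at most
   delta projects to 0: that projection lives on eigenvalues > delta. *)
Lemma orth_Ztilde_proj0 (w : 'rV[C]_n) :
  w *m proj_ortho Zt = 0 ->
  energy A (w *m proj_ortho Y) <= delta * sqnorm (w *m proj_ortho Y) ->
  w *m proj_ortho Y = 0.
Proof.
move=> wZt; rewrite proj_ortho_onb mulmxA energy_onb sqnorm_onb.
move=> /(support_gt_form_le _ restr_normal) -> //; first by rewrite mul0mx.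
move=> i ci; rewrite real_ltNge ?(ger0_real (restr_spectrum_ge0 i)) //.
apply: contraTN ci => d_le; rewrite negbK; apply/eqP.
exact: orth_Ztilde_coord wZt (restr_spectrum_ge0 i) d_le.
Qed.

End LowEnergySubspace.

Section Closeness.
Context {C : numClosedFieldType} {n p : nat}.
Context {Z A : 'M[C]_n} {Delta : C} {Y : 'M[C]_(p, n)} {delta : C}.
Hypothesis hA : AGSP Delta Z A.
Hypothesis hDelta : Delta <= 2^-1.
Local Notation Zt := (Ztilde delta (1%:M - A *m A^t*) Y).

Lemma half_le_one_sub_Delta : 2^-1 <= 1 - Delta.
Proof. by rewrite lerBrDl -lerBrDr {1}(splitr 1) mul1r addrK. Qed.

(* Ztilde is nearly contained in Z: since Delta <= 1/2, the residual of v off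
   Z is at most twice the energy of v, which is at most delta ||v||^2. *)
Lemma Ztilde_near_Z (v : 'rV[C]_n) :
  (v <= Zt)%MS -> (1 - 2 * delta) * sqnorm v <= sqnorm (v *m proj_ortho Z).
Proof.
move=> vZt; set r := v - v *m proj_ortho Z.
have r_le : 2^-1 * sqnorm r <= delta * sqnorm v.
  apply: le_trans _ (Ztilde_low_energy v vZt).
  apply: le_trans _ (energy_ge_residual hA v).
  by apply: ler_wpM2r; [exact: sqnorm_ge0 | exact: half_le_one_sub_Delta].
rewrite ler_pdivrMl ?ltr0n // mulrA in r_le.
by rewrite mulrBl mul1r lerBlDr {1}(sqnorm_proj_split Z v) lerD2l.
Qed.

Hypothesis hdelta : 0 < delta.
Hypothesis hY : viable delta Y Z.

(* The projection onto Ztilde is injective on Z: for w in Z orthogonal to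
   Ztilde, y = P_Y w loses at most the fraction delta of its norm under P_Z,
   so its energy is at most delta ||y||^2; hence y = 0, and by viability
   w = 0. *)
Lemma Z_proj_Ztilde_inj : delta < 1 ->
  forall w : 'rV[C]_n, (w <= Z)%MS -> w *m proj_ortho Zt = 0 -> w = 0.
Proof.
move=> d1 w wZ wZt; set y := w *m proj_ortho Y.
have Delta1 : Delta <= 1.
  by apply: le_trans hDelta _; rewrite invf_le1 ?ler1n ?ltr0n.
have y_low : energy A y <= delta * sqnorm y.
  apply: le_trans (energy_le_residual hA y) _.
  have := viable_proj_back hY d1 w wZ; rewrite -/y.
  by rewrite (sqnorm_proj_split Z y) mulrBl mul1r lerBlDr lerD2l.
have y0 : y = 0.
  apply: (orth_Ztilde_proj0 _ (gtr0_real hdelta) _ wZt y_low) => v.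
  exact: energy_ge0 hA v Delta1.
have := viableW hY _ wZ; rewrite -/y y0 sqnorm0 pmulr_rle0 ?subr_gt0 //.
by move=> w_le0; apply/eqP; rewrite -sqnorm_eq0 eq_le w_le0 sqnorm_ge0.
Qed.

End Closeness.

Theorem lemma3p4 (C : numClosedFieldType) (n : nat)
  (Z : 'M[C]_n) (A : 'M[C]_n) (Delta : C)
  (hA : AGSP Delta Z A) (hDelta : Delta <= 2^-1)
  (delta : C) (hdelta : 0 < delta)
  (Y : 'M[C]_n) (hY : viable delta Y Z) :
  let Ht := 1%:M - A *m A^t* in
  close (2 * delta) (Ztilde delta Ht Y) Z.
Proof.
move=> Ht.
(* For delta >= 1/2 closeness is vacuous, since 1 - 2 delta <= 0. *)
have [big|small] := boolP (2^-1 <= delta).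
  have h1 : 1 - 2 * delta <= 0.
    by rewrite subr_le0 -ler_pdivrMl ?ltr0n // mulr1.
  by split => v _ _; apply: le_trans h1 (sqnorm_ge0 _).
have d1 : delta < 1.
  apply: (@lt_trans _ _ 2^-1); last by rewrite invf_lt1 ?ltr0n ?ltr1n.
  by rewrite real_ltNge ?rpredV ?realn ?gtr0_real.
split => v vS v1.
  have := proj_bound_sym Z _ _ (Ztilde_near_Z hA hDelta)
    (Z_proj_Ztilde_inj hA hDelta hdelta hY d1) v vS.
  by rewrite v1 mulr1.
by have := Ztilde_near_Z hA hDelta v vS; rewrite v1 mulr1.
Qed.
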